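(* Let $C:=-2.15$ and let $g:\mathbb{R}\to\mathbb{R}$ be $$g(z):=\exp\big(z^3+(-2-3C)z^2+(3C^2+4C)z+\ln 2\big)-1 .$$ For $W=[w_1,w_2,w_3]$ with $w_1,w_2,w_3\in\mathbb{R}^3$, define $f(\cdot;W):\mathbb{R}^3\to\mathbb{R}^3$ by $f(x;W):=[g(\langle w_1,x\rangle),g(\langle w_2,x\rangle),g(\langle w_3,x\rangle)]^\top$. Then there exists such a $W$ for which $f(\cdot;W)$ has two distinct fixed points $p_1,p_2\in\mathbb{R}^3$ such that for each $i\in\{1,2\}$ there exist constants $\epsilon_i>0$, $c_i>0$ and $K_i\in[0,1)$ with the following property: for every initial point $x^{(0)}\in[p_{i,1}-\epsilon_i,p_{i,1}+\epsilon_i]\times\{1\}\times\{1\}$, the fixed-point iteration $x^{(t)}=f(x^{(t-1)};W)$ ($t\ge1$) converges to $p_i$, and for every $t\ge2$, $$\|x^{(t)}-p_i\|_\infty\le K_i^t\cdot c_i\epsilon_i .$$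
   Context: $p_{i,1}$ denotes the first coordinate of $p_i$; $\|\cdot\|_\infty$ is the $\ell_\infty$ norm. A fixed point of $F$ is a point $p$ with $F(p)=p$. *)

From Stdlib Require Export Reals Lra.
Open Scope R_scope.

Definition vec3 : Type := (R * R * R)%type.
Definition v1 (v : vec3) : R := fst (fst v).
Definition v2 (v : vec3) : R := snd (fst v).
Definition v3 (v : vec3) : R := snd v.

Definition dot3 (u v : vec3) : R := v1 u * v1 v + v2 u * v2 v + v3 u * v3 v.
Definition sub3 (u v : vec3) : vec3 := (v1 u - v1 v, v2 u - v2 v, v3 u - v3 v).
Definition norm_inf3 (v : vec3) : R := Rmax (Rabs (v1 v)) (Rmax (Rabs (v2 v)) (Rabs (v3 v))).

Definition Cst : R := - (215 / 100).

Definition g (z : R) : R :=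
  exp (z ^ 3 + (-2 - 3 * Cst) * z ^ 2 + (3 * Cst ^ 2 + 4 * Cst) * z + ln 2) - 1.

Definition mat3 : Type := (vec3 * vec3 * vec3)%type.

Definition fW (W : mat3) (x : vec3) : vec3 :=
  (g (dot3 (fst (fst W)) x), g (dot3 (snd (fst W)) x), g (dot3 (snd W) x)).

Definition iterate (W : mat3) (x0 : vec3) (t : nat) : vec3 := Nat.iter t (fW W) x0.

Definition cv3 (x : nat -> vec3) (p : vec3) : Prop :=
  Un_cv (fun t => norm_inf3 (sub3 (x t) p)) 0.

Definition local_lin_conv (W : mat3) (p : vec3) : Prop :=
  exists eps c K : R, 0 < eps /\ 0 < c /\ 0 <= K < 1 /\
    forall a : R, v1 p - eps <= a <= v1 p + eps ->
      let x0 : vec3 := (a, 1, 1) in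
      cv3 (iterate W x0) p /\
      forall t : nat, (2 <= t)%nat ->
        norm_inf3 (sub3 (iterate W x0 t) p) <= K ^ t * c * eps.

(* The exponent [P] of [g] has two critical points, [z1 = C] and [z2 = C + 4/3],
   so [g] is flat at both.  Take [W] with first row [(al, bb, 0)] and the other
   rows zero: on the line [(x, 1, 1)] the map [f(.; W)] acts as
   [x |-> h x = g (al x + bb)] (the other coordinates stay [g 0 = 1]).  Choosing
   the affine map [z |-> al z + bb] to send [g zi] back to [zi] makes
   [(g zi, 1, 1)] fixed points, and since [g' zi = 0] the one-dimensional map [h]
   converges quadratically, hence with a small contraction factor, near
   [g zi]. *)
From Stdlib Require Import Reals Lra Psatz.
Open Scope R_scope.

Lemma exp_le_mono x y : x <= y -> exp x <= exp y.
Proof. intros [Hlt | ->]; [left; apply exp_increasing |]; lra. Qed.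

Lemma Rabs_exp_sub1_le u : Rabs u <= 1/2 -> Rabs (exp u - 1) <= 2 * Rabs u.
Proof.
  intros Hu.
  pose proof (exp_ineq1_le u). pose proof (exp_ineq1_le (-u)).
  assert (exp u * exp (-u) = 1) by (rewrite <- exp_plus, Rplus_opp_r; apply exp_0).
  pose proof (exp_pos u). pose proof (exp_pos (-u)).
  unfold Rabs in *; destruct (Rcase_abs u), (Rcase_abs (exp u - 1)); nra.
Qed.

Lemma exp_neg2_ge : 1/9 <= exp (-2).
Proof.
  replace (-2) with (- (1 + 1)) by ring. rewrite exp_Ropp, exp_plus.
  pose proof exp_le_3. pose proof (exp_pos 1).
  apply (Rmult_le_reg_l (exp 1 * exp 1)); [nra |].
  rewrite Rinv_r by nra. nra.
Qed.

Definition contracts_near (h : R -> R) (p eps K : R) : Prop :=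
  forall x, Rabs (x - p) <= eps -> Rabs (h x - p) <= K * Rabs (x - p).

Lemma contracts_near_of_sqr h p eps M : 0 <= M ->
  (forall x, Rabs (x - p) <= eps -> Rabs (h x - p) <= M * (x - p) ^ 2) ->
  contracts_near h p eps (M * eps).
Proof.
  intros HM Hh x Hx.
  specialize (Hh x Hx). rewrite <- pow2_abs in Hh.
  pose proof (Rabs_pos (x - p)).
  assert (0 <= M * Rabs (x - p)) by nra. nra.
Qed.

Lemma iter_contracts_near h p eps K a t : 0 <= K <= 1 ->
  contracts_near h p eps K -> Rabs (a - p) <= eps ->
  Rabs (Nat.iter t h a - p) <= K ^ t * Rabs (a - p).
Proof.
  intros HK Hh Ha. induction t as [| t IH]; simpl; [lra |].
  assert (K ^ t <= 1) by (rewrite <- (pow1 t); apply pow_incr; lra).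
  pose proof (pow_le K t ltac:(lra)). pose proof (Rabs_pos (a - p)).
  assert (Hnear : Rabs (Nat.iter t h a - p) <= eps) by nra.
  specialize (Hh _ Hnear). nra.
Qed.

Lemma Un_cv_0_of_geom_bound (u : nat -> R) K c : 0 <= K < 1 -> 0 <= c ->
  (forall t, 0 <= u t <= K ^ t * c) -> Un_cv u 0.
Proof.
  intros HK Hc Hu e He.
  destruct (pow_lt_1_zero K ltac:(rewrite Rabs_right; lra) (e / (c + 1)))
    as [N HN]; [apply Rdiv_lt_0_compat; lra |].
  exists N. intros n Hn. unfold R_dist. rewrite Rminus_0_r.
  specialize (HN n Hn). specialize (Hu n).
  rewrite Rabs_right in HN by (apply Rle_ge, pow_le; lra).
  rewrite Rabs_right by lra.
  apply (Rmult_lt_compat_r (c + 1)) in HN; [| lra].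
  unfold Rdiv in HN. rewrite Rmult_assoc, Rinv_l in HN by lra.
  pose proof (pow_le K n ltac:(lra)). nra.
Qed.

Lemma iterate_line W h :
  (forall x, fW W (x, 1, 1) = (h x, 1, 1)) ->
  forall a t, iterate W (a, 1, 1) t = (Nat.iter t h a, 1, 1).
Proof.
  intros HW a t. unfold iterate.
  induction t as [| t IH]; simpl; [reflexivity |]. rewrite IH. apply HW.
Qed.

Lemma norm_inf3_sub_line x y : norm_inf3 (sub3 (x, 1, 1) (y, 1, 1)) = Rabs (x - y).
Proof.
  unfold norm_inf3, sub3, v1, v2, v3; simpl.
  rewrite Rminus_diag, Rabs_R0, (Rmax_left 0 0) by lra.
  apply Rmax_left, Rabs_pos.
Qed.

Lemma local_lin_conv_of_contracts_near W h p eps K :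
  (forall x, fW W (x, 1, 1) = (h x, 1, 1)) -> 0 < eps -> 0 <= K < 1 ->
  contracts_near h p eps K -> local_lin_conv W (p, 1, 1).
Proof.
  intros HW Heps HK Hh.
  exists eps, 1, K. split; [lra |]. split; [lra |]. split; [lra |].
  intros a Ha x0; unfold x0, v1 in *; simpl in Ha.
  assert (Hap : Rabs (a - p) <= eps) by (apply Rabs_le; lra).
  assert (Hbound : forall t,
            norm_inf3 (sub3 (iterate W (a, 1, 1) t) (p, 1, 1)) <= K ^ t * eps).
  { intros t. rewrite (iterate_line W h HW), norm_inf3_sub_line.
    pose proof (iter_contracts_near h p eps K a t ltac:(lra) Hh Hap).
    pose proof (pow_le K t ltac:(lra)). nra. }
  split.
  - apply (Un_cv_0_of_geom_bound _ K eps); [lra | lra |].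
    intros t. split; [| apply Hbound].
    rewrite (iterate_line W h HW), norm_inf3_sub_line. apply Rabs_pos.
  - intros t _. rewrite Rmult_1_r. apply Hbound.
Qed.

Definition P (z : R) : R := z ^ 3 + (-2 - 3 * Cst) * z ^ 2 + (3 * Cst ^ 2 + 4 * Cst) * z.

Lemma g_eq_exp_P z : g z = 2 * exp (P z) - 1.
Proof. unfold g, P. rewrite exp_plus, exp_ln by lra. ring. Qed.

Lemma g_0 : g 0 = 1.
Proof. rewrite g_eq_exp_P. replace (P 0) with 0 by (unfold P; ring). rewrite exp_0. ring. Qed.

Definition z1 : R := Cst.
Definition z2 : R := Cst + 4/3.

Lemma P_z1 : P z1 = -5547/8000.
Proof. unfold P, z1, Cst. field. Qed.

Lemma P_z2 : P z2 = -405769/216000.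
Proof. unfold P, z2, Cst. field. Qed.

Lemma P_expand_z1 y : P (z1 + y) = P z1 + y ^ 2 * (y - 2).
Proof. unfold P, z1. ring. Qed.

Lemma P_expand_z2 y : P (z2 + y) = P z2 + y ^ 2 * (y + 2).
Proof. unfold P, z2, Cst. field. Qed.

Lemma g_sub_le_sqr zi s y : P (zi + y) = P zi + y ^ 2 * (y + s) ->
  P zi <= 0 -> Rabs s <= 2 -> Rabs y <= 1/100 ->
  Rabs (g (zi + y) - g zi) <= 9 * y ^ 2.
Proof.
  intros HP Hzi Hs Hy.
  set (u := y ^ 2 * (y + s)).
  assert (Hu : Rabs u <= y ^ 2 * (201/100)).
  { unfold u. rewrite Rabs_mult, <- RPow_abs, pow2_abs.
    pose proof (Rabs_triang y s). pose proof (pow2_ge_0 y). nra. }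
  assert (Hy2 : y ^ 2 <= 1/10000) by (rewrite <- pow2_abs; pose proof (Rabs_pos y); nra).
  pose proof (Rabs_exp_sub1_le u ltac:(lra)).
  assert (Hexp : 0 < exp (P zi) <= 1) by (split; [apply exp_pos | rewrite <- exp_0; apply exp_le_mono; lra]).
  rewrite !g_eq_exp_P, HP, exp_plus; fold u.
  replace (2 * (exp (P zi) * exp u) - 1 - (2 * exp (P zi) - 1))
    with (2 * exp (P zi) * (exp u - 1)) by ring.
  rewrite Rabs_mult, Rabs_right by lra.
  assert (Rabs (exp u - 1) <= 402/100 * y ^ 2) by lra.
  pose proof (Rabs_pos (exp u - 1)). pose proof (pow2_ge_0 y). nra.
Qed.

Lemma g_z1_sub_g_z2_ge : 2/9 <= g z1 - g z2.
Proof.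
  rewrite !g_eq_exp_P.
  replace (exp (P z1)) with (exp (P z2) * exp (P z1 - P z2))
    by (rewrite <- exp_plus; f_equal; ring).
  pose proof (exp_ineq1_le (P z1 - P z2)).
  assert (1/9 <= exp (P z2))
    by (eapply Rle_trans; [apply exp_neg2_ge | apply exp_le_mono; rewrite P_z2; lra]).
  rewrite P_z1, P_z2 in *. nra.
Qed.

Definition al : R := (z2 - z1) / (g z2 - g z1).
Definition bb : R := z1 - al * g z1.

Lemma al_g_z1 : al * g z1 + bb = z1.
Proof. unfold bb. ring. Qed.

Lemma al_g_z2 : al * g z2 + bb = z2.
Proof. pose proof g_z1_sub_g_z2_ge. unfold bb, al. field. lra. Qed.

Lemma Rabs_al_le : Rabs al <= 6.
Proof.
  pose proof g_z1_sub_g_z2_ge.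
  unfold al, Rdiv. rewrite Rabs_mult, Rabs_inv by lra.
  replace (z2 - z1) with (4/3) by (unfold z1, z2; ring).
  rewrite Rabs_right, Rabs_left by lra.
  apply (Rmult_le_reg_r (- (g z2 - g z1))); [lra |].
  rewrite Rmult_assoc, Rinv_l by lra. lra.
Qed.

Definition W0 : mat3 := ((al, bb, 0), (0, 0, 0), (0, 0, 0)).
Definition h (x : R) : R := g (al * x + bb).

Lemma fW_W0_line x : fW W0 (x, 1, 1) = (h x, 1, 1).
Proof.
  unfold fW, W0, dot3, v1, v2, v3, h; simpl.
  replace (al * x + bb * 1 + 0 * 1) with (al * x + bb) by ring.
  replace (0 * x + 0 * 1 + 0 * 1) with 0 by ring. rewrite g_0. reflexivity.
Qed.

Lemma h_sub_le_sqr zi s : (forall y, P (zi + y) = P zi + y ^ 2 * (y + s)) ->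
  P zi <= 0 -> Rabs s <= 2 -> al * g zi + bb = zi ->
  forall x, Rabs (x - g zi) <= 1/1000 -> Rabs (h x - g zi) <= 324 * (x - g zi) ^ 2.
Proof.
  intros HP Hzi Hs Hfix x Hx.
  unfold h. replace (al * x + bb) with (zi + al * (x - g zi)) by lra.
  pose proof Rabs_al_le. pose proof (Rabs_pos al). pose proof (Rabs_pos (x - g zi)).
  assert (Hy : Rabs (al * (x - g zi)) <= 1/100) by (rewrite Rabs_mult; nra).
  eapply Rle_trans; [exact (g_sub_le_sqr zi s _ (HP _) Hzi Hs Hy) |].
  rewrite Rpow_mult_distr.
  assert (al ^ 2 <= 36) by (rewrite <- pow2_abs; nra).
  pose proof (pow2_ge_0 (x - g zi)). nra.
Qed.

Lemma local_lin_conv_W0 zi s : (forall y, P (zi + y) = P zi + y ^ 2 * (y + s)) ->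
  P zi <= 0 -> Rabs s <= 2 -> al * g zi + bb = zi ->
  local_lin_conv W0 (g zi, 1, 1).
Proof.
  intros HP Hzi Hs Hfix.
  apply (local_lin_conv_of_contracts_near W0 h _ (1/1000) (324 * (1/1000)));
    [exact fW_W0_line | lra | lra |].
  apply contracts_near_of_sqr; [lra |]. exact (h_sub_le_sqr zi s HP Hzi Hs Hfix).
Qed.

Theorem lemmaC4 :
  exists (W : mat3) (p1 p2 : vec3),
    p1 <> p2 /\ fW W p1 = p1 /\ fW W p2 = p2 /\
    local_lin_conv W p1 /\ local_lin_conv W p2.
Proof.
  exists W0, (g z1, 1, 1), (g z2, 1, 1).
  split; [intros E; injection E; pose proof g_z1_sub_g_z2_ge; lra |].
  split; [rewrite fW_W0_line; unfold h; rewrite al_g_z1; reflexivity |].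
  split; [rewrite fW_W0_line; unfold h; rewrite al_g_z2; reflexivity |].
  split.
  - apply (local_lin_conv_W0 z1 (-2)); [exact P_expand_z1 | rewrite P_z1; lra
      | rewrite Rabs_left; lra | exact al_g_z1].
  - apply (local_lin_conv_W0 z2 2); [exact P_expand_z2 | rewrite P_z2; lra
      | rewrite Rabs_right; lra | exact al_g_z2].
Qed.
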